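(* Let $n\ge 1$ and let $\mathbf{s}=[s_1,\dots,s_n]^T\in\mathbb{R}^n$ have pairwise distinct entries. Let $A_{\mathbf{s}}\in\mathbb{R}^{n\times n}$ be given by $A_{\mathbf{s}}[i,j]=|s_i-s_j|$, and let $\mathbb{1}\in\mathbb{R}^n$ be the all-ones column vector. Then for every $i,j\in\{1,\dots,n\}$, $$P_{\mathrm{sort}(\mathbf{s})}[i,j]=\begin{cases}1 & \text{if } j=\arg\max\big[(n+1-2i)\mathbf{s}-A_{\mathbf{s}}\mathbb{1}\big],\\ 0 & \text{otherwise,}\end{cases}$$ where the $\arg\max$ is taken over the $n$ coordinates of the vector $(n+1-2i)\mathbf{s}-A_{\mathbf{s}}\mathbb{1}$ (whose $j$-th coordinate is $(n+1-2i)s_j-\sum_{k=1}^n|s_j-s_k|$), and this maximizer is unique.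
   Context: A permutation $\mathbf{z}=[z_1,\dots,z_n]^T$ of $\{1,\dots,n\}$ has permutation matrix $P_{\mathbf{z}}\in\{0,1\}^{n\times n}$ with $P_{\mathbf{z}}[i,j]=1$ iff $j=z_i$. For $\mathbf{s}\in\mathbb{R}^n$, $\mathrm{sort}(\mathbf{s})$ is the permutation listing the indices of $\mathbf{s}$ in order of decreasing value: $z_1$ is the index of the largest entry, $z_2$ the index of the second largest, and so on (e.g. $\mathrm{sort}([9,1,5,2]^T)=[1,3,4,2]^T$). *)

From mathcomp Require Import all_boot all_order all_algebra.
Set Implicit Arguments. Unset Strict Implicit. Unset Printing Implicit Defensive.
Import Order.TTheory GRing.Theory Num.Theory.
Local Open Scope ring_scope.

(* Indices 1..n of the paper are represented by 'I_n = {0,..,n-1}. *)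

Definition srank (R : realFieldType) (n : nat) (s : 'I_n -> R) (j : 'I_n) : nat :=
  #|[set k : 'I_n | s j < s k]|.

(* sort(s): z i = index of the (i+1)-th largest entry of s (0-based i).
   For s with pairwise distinct entries there is exactly one such index;
   the default (i itself) is never used in that case. *)
Definition sort_perm (R : realFieldType) (n : nat) (s : 'I_n -> R) (i : 'I_n) : 'I_n :=
  odflt i [pick j : 'I_n | srank s j == i].

Definition perm_matrix (R : realFieldType) (n : nat) (z : 'I_n -> 'I_n) : 'M[R]_n :=
  \matrix_(i, j) (if j == z i then 1 else 0).

Definition distmx (R : realFieldType) (n : nat) (s : 'I_n -> R) : 'M[R]_n :=
  \matrix_(i, j) `|s i - s j|.

Definition colvec (R : realFieldType) (n : nat) (s : 'I_n -> R) : 'cV[R]_n :=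
  \col_j s j.

(* the vector (n + 1 - 2i) s - A_s 1, for the paper's 1-based row index
   i = i0 + 1 with i0 : 'I_n; so n + 1 - 2i = n - 1 - 2 i0. *)
Definition sortvec (R : realFieldType) (n : nat) (s : 'I_n -> R) (i0 : 'I_n) : 'cV[R]_n :=
  ((n%:R + 1 - 2 * (i0.+1)%:R) *: colvec s) - distmx s *m const_mx 1.

Definition is_unique_argmax (R : realFieldType) (n : nat) (v : 'cV[R]_n) (j : 'I_n) : bool :=
  [forall k : 'I_n, (k != j) ==> (v k 0 < v j 0)].

From mathcomp Require Import all_boot all_order all_algebra.
From mathcomp Require Import lra.
Import Order.TTheory GRing.Theory Num.Theory.
Set Implicit Arguments. Unset Strict Implicit. Unset Printing Implicit Defensive.
Local Open Scope ring_scope.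

(* Write F(x) = sum_l |x - s_l|; the j-th coordinate for row i (0-based) is
   then (n - 1 - 2 i) s_j - F(s_j).  Moving x from s_j to s_k changes each
   |x - s_l| by at most |s_j - s_k|, and by exactly that amount when s_j lies
   between s_k and s_l.  If s_j has rank i there are i + 1 such l when
   s_k < s_j and n - i when s_k > s_j; in both cases the coefficient
   n - 1 - 2 i makes coordinate j exceed coordinate k by at least
   |s_j - s_k| > 0. *)

Section DistanceSums.
Variables (R : realDomainType) (I : finType).

Lemma sum_ge_card_diff (B : {set I}) (h : I -> R) (d : R) :
  (forall l, - d <= h l) -> (forall l, l \in B -> h l = d) ->
  (#|B|%:R - #|~: B|%:R) * d <= \sum_l h l.
Proof.
move=> h_ge h_B; rewrite (bigID (mem B)) /= mulrBl.
rewrite (eq_bigr (fun=> d)) // sumr_const lerD ?mulr_natl //.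
rewrite (eq_bigl (mem (~: B))) => [|l]; last by rewrite !inE.
by rewrite -mulNrn -sumr_const ler_sum.
Qed.

Lemma sum_dist_sub_geL (s : I -> R) (x y : R) : x < y ->
  (#|[set l | y <= s l]|%:R - #|~: [set l | y <= s l]|%:R) * (y - x)
    <= \sum_l `|x - s l| - \sum_l `|y - s l|.
Proof.
move=> lt_xy; rewrite -sumrB; apply: sum_ge_card_diff => l.
  rewrite lerNl opprB -[y - x]gtr0_norm ?subr_gt0 // lerBlDl.
  by rewrite [_ + `|y - x|]addrC ler_distD.
rewrite inE => le_y_sl.
rewrite distrC ger0_norm ?subr_ge0 ?(le_trans (ltW lt_xy)) //.
rewrite distrC ger0_norm ?subr_ge0 //; lra.
Qed.

Lemma sum_dist_sub_geR (s : I -> R) (x y : R) : x < y ->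
  (#|[set l | s l <= x]|%:R - #|~: [set l | s l <= x]|%:R) * (y - x)
    <= \sum_l `|y - s l| - \sum_l `|x - s l|.
Proof.
move=> lt_xy; have lt_Ny_Nx : - y < - x by rewrite ltrN2.
move: (@sum_dist_sub_geL (fun l => - s l) _ _ lt_Ny_Nx).
have distN z l : `|- z - - s l| = `|z - s l| by rewrite -opprD normrN.
have -> : [set l | - x <= - s l] = [set l | s l <= x].
  by apply/setP => l; rewrite !inE lerN2.
by rewrite opprK (addrC (- x)) !(eq_bigr _ (fun l _ => distN _ l)).
Qed.

End DistanceSums.

Section SortingVector.
Variables (R : realFieldType) (n : nat) (s : 'I_n -> R).
Hypothesis s_inj : injective s.

Lemma srank_ltn (j : 'I_n) : (srank s j < n)%N.
Proof.
rewrite -[n in (_ < n)%N]card_ord -cardsT; apply/proper_card.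
by rewrite properT; apply/eqP => /setP /(_ j); rewrite !inE ltxx.
Qed.

Lemma ltn_srank (j k : 'I_n) : s j < s k -> (srank s k < srank s j)%N.
Proof.
move=> lt_jk; apply/proper_card/properP; split.
  by apply/subsetP => l; rewrite !inE; apply: lt_trans.
by exists k; rewrite !inE ?ltxx.
Qed.

Lemma srank_inj : injective (srank s).
Proof.
move=> j k eq_jk; apply: s_inj; apply/eqP; apply: contraT.
by rewrite neq_lt => /orP[] /ltn_srank; rewrite eq_jk ltnn.
Qed.

Lemma srank_sort_perm (i : 'I_n) : srank s (sort_perm s i) = i.
Proof.
pose rk j : 'I_n := Ordinal (srank_ltn j).
have [rk_inv _ rk_invK] : bijective rk.
  by apply: injF_bij => j k /(congr1 val) /srank_inj.
rewrite /sort_perm; case: pickP => [j /eqP // | no_j].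
have := no_j (rk_inv i).
by rewrite -[srank _ _]/(val (rk (rk_inv i))) rk_invK eqxx.
Qed.

Lemma sortvecE (i j : 'I_n) :
  sortvec s i j 0 = (n%:R + 1 - 2 * (i.+1)%:R) * s j - \sum_l `|s j - s l|.
Proof.
rewrite !mxE; congr (_ - _); apply: eq_bigr => l _.
by rewrite !mxE mulr1.
Qed.

Lemma sortvec_gap (i j k : 'I_n) : srank s j = i ->
  `|s j - s k| <= sortvec s i j 0 - sortvec s i k 0.
Proof.
move=> rk_j; rewrite !sortvecE.
have card_split (B : {set 'I_n}) : #|B|%:R + #|~: B|%:R = n%:R :> R.
  by rewrite -natrD cardsC card_ord.
set above := [set l | s j < s l].
case: (ltgtP (s k) (s j)) => [lt_kj | lt_jk | /s_inj ->]; last first.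
- by rewrite !subrr normr0.
- have := sum_dist_sub_geR s lt_jk.
  have -> : [set l | s l <= s j] = ~: above.
    by apply/setP => l; rewrite !inE leNgt.
  have := card_split above.
  rewrite setCK [#|above|]rk_j -[i.+1%:R]natr1 distrC gtr0_norm ?subr_gt0 //.
  move=> <-; lra.
- have := sum_dist_sub_geL s lt_kj.
  have -> : [set l | s j <= s l] = j |: above.
    by apply/setP => l; rewrite !inE le_eqVlt (inj_eq s_inj) eq_sym.
  have := card_split (j |: above).
  rewrite cardsU1 inE ltxx /= add1n [#|above|]rk_j gtr0_norm ?subr_gt0 //.
  move=> <-; lra.
Qed.

Lemma sortvec_lt_sort_perm (i k : 'I_n) : k != sort_perm s i ->
  sortvec s i k 0 < sortvec s i (sort_perm s i) 0.
Proof.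
move=> ne_k; rewrite -subr_gt0.
apply: lt_le_trans (sortvec_gap k (srank_sort_perm i)).
by rewrite normr_gt0 subr_eq0 (inj_eq s_inj) eq_sym.
Qed.

Lemma is_unique_argmax_sortvec (i j : 'I_n) :
  is_unique_argmax (sortvec s i) j = (j == sort_perm s i).
Proof.
have [-> | ne_j] := eqVneq j (sort_perm s i).
  by apply/forallP => k; apply/implyP; apply: sortvec_lt_sort_perm.
apply/negbTE/forallP => /(_ (sort_perm s i)); rewrite eq_sym ne_j /=.
by rewrite ltNge ltW // sortvec_lt_sort_perm.
Qed.

End SortingVector.

Theorem corollary1 (R : realFieldType) (n : nat) (s : 'I_n -> R) :
  (0 < n)%N -> injective s ->
  forall i : 'I_n,
    (exists j : 'I_n, is_unique_argmax (sortvec s i) j) /\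
    (forall j : 'I_n,
       perm_matrix R (sort_perm s) i j
       = (if is_unique_argmax (sortvec s i) j then 1 else 0)).
Proof.
move=> _ s_inj i; split.
  by exists (sort_perm s i); rewrite is_unique_argmax_sortvec.
by move=> j; rewrite mxE is_unique_argmax_sortvec.
Qed.
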